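(* Let $q$ be a prime power, $k\ge 2$, and let $\mathcal{L}$ be a Cameron-Liebler $k$-set of $\mathrm{AG}(n,q)$ with parameter $x$. Let $0\le i\le k-2$, let $I$ be an $i$-dimensional subspace of $\pi_\infty$, and let $\pi$ be an $(n-i-1)$-dimensional subspace of $\mathrm{PG}(n,q)$ disjoint from $I$. Let $\pi_A=\pi\setminus(\pi\cap\pi_\infty)$, an affine space isomorphic to $\mathrm{AG}(n-i-1,q)$ with hyperplane at infinity $\pi\cap\pi_\infty$, and let $\mathcal{J}=\{K\cap\pi: K\in\mathcal{L},\ I\subseteq K\}$, a set of $(k-i-1)$-spaces of $\pi_A$. If $n\ge 2k-i$ (and $n\ge k+2$), then $\mathcal{J}$ is a Cameron-Liebler $(k-i-1)$-set of $\pi_A$ with parameter $x$.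
   Context: $\mathrm{AG}(n,q)$ is $\mathrm{PG}(n,q)$ with a hyperplane $\pi_\infty$ removed; affine points are points outside $\pi_\infty$, affine $k$-spaces are $k$-dimensional projective subspaces not contained in $\pi_\infty$. For an affine space $\mathrm{AG}(m,q)$ and $1\le j\le m-1$, with $A$ the incidence matrix of its affine points versus affine $j$-spaces, a set $\mathcal{M}$ of affine $j$-spaces is a Cameron-Liebler $j$-set if its characteristic vector lies in the real row space $\mathrm{Im}(A^T)$; its parameter is $|\mathcal{M}|/\left[{m\atop j}\right]_q$, where $\left[{a\atop b}\right]_q=\frac{(q^a-1)\cdots(q^{a-b+1}-1)}{(q^b-1)\cdots(q-1)}$. *)

(* Projective space PG(n,q) is modelled as the lattice of
   subspaces of F^(n+1) (row vectors), F a finite field with #|F| = q.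
   A projective d-space is a vector subspace of rank d+1, represented by its
   canonical square matrix <<A>>%MS. *)
From HB Require Import structures.
From mathcomp Require Import all_boot all_order all_algebra.
From mathcomp Require Import reals.
Set Implicit Arguments. Unset Strict Implicit. Unset Printing Implicit Defensive.
Import Order.TTheory GRing.Theory Num.Theory.
Local Open Scope ring_scope.

Section Defs.
Variables (R : realType) (F : finFieldType) (n : nat).
Local Notation sub := 'M[F]_n.+1.

Definition is_sub (A : sub) : bool := (<<A>>%MS == A).

(* Affine space given by an ambient projective subspace S with hyperplane
   at infinity H (H a hyperplane of S).
   Affine points: projective points of S not in H. *)
Definition aff_points (S H : sub) : {set sub} :=
  [set P : sub | [&& is_sub P, \rank P == 1%N, (P <= S)%MS & ~~ (P <= H)%MS]].

Definition aff_jspaces (S H : sub) (j : nat) : {set sub} :=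
  [set K : sub | [&& is_sub K, \rank K == j.+1, (K <= S)%MS & ~~ (K <= H)%MS]].

Definition gaussR (a b : nat) : R :=
  (\prod_(0 <= t < b) ((#|F|%:R : R) ^+ (a - t) - 1)) /
  (\prod_(0 <= t < b) ((#|F|%:R : R) ^+ t.+1 - 1)).

(* M is a Cameron-Liebler j-set of the affine space (S,H), of dimension
   m = rank S - 1, with parameter x: M is a set of affine j-spaces whose
   characteristic vector lies in the real row space Im(A^T) of the
   point/j-space incidence matrix A, i.e. chi = A^T v for some real vector v
   indexed by affine points; and x = |M| / [m choose j]_q. *)
Definition CL_set (S H : sub) (j : nat) (M : {set sub}) (x : R) : Prop :=
  [/\ M \subset aff_jspaces S H j,
      exists v : sub -> R, forall K, K \in aff_jspaces S H j ->
        ((K \in M)%:R : R) =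
        \sum_(P in aff_points S H) ((P <= K)%MS%:R : R) * v P
    & x = (#|M|%:R : R) / gaussR (\rank S).-1 j].

Definition Jset (L : {set sub}) (I pi : sub) : {set sub} :=
  [set <<(K :&: pi)%MS>>%MS | K in L & (I <= K)%MS].

End Defs.

(* Write the characteristic vector of L as A^T v, i.e. chi_L(K) is the sum of
   v(P) over the affine points P of K.  For a subspace W of the hyperplane at
   infinity of vector dimension w, every affine point P spans with W a space of
   vector dimension w + 1, so double counting gives
   #{K in L | W <= K} = (sum_P v P) * [n - w, k - w]_q.
   For W = 0 this counts L, and for W = I it counts J, since K |-> K :&: pi is
   a bijection from the members of L through I onto J with inverse
   M |-> I + M; hence both parameters equal sum_P v P.  Finally, P <= I + M
   holds exactly when the projection (I + P) :&: pi of P from I, an affine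
   point of pi, lies in M, so chi_J(M) = chi_L(I + M) is the sum over the
   affine points Q of M of w(Q) = sum of v(P) over the affine points
   P <= I + Q. *)

From HB Require Import structures.
From mathcomp Require Import all_boot all_order all_algebra.
From mathcomp Require Import reals.
From mathcomp Require Import zify.
Set Implicit Arguments. Unset Strict Implicit. Unset Printing Implicit Defensive.
Import Order.TTheory GRing.Theory Num.Theory.
Local Open Scope ring_scope.

Section RankLemmas.
Variables (F : fieldType) (N : nat).

Lemma eqmx_rank_geq m1 m2 (A : 'M[F]_(m1, N)) (B : 'M[F]_(m2, N)) :
  (A <= B)%MS -> (\rank B <= \rank A)%N -> (A :=: B)%MS.
Proof.
by move=> sAB rBA; apply/eqmxP; rewrite -(mxrank_leqif_eq sAB) eqn_leq rBA mxrankS.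
Qed.

Lemma mxrank_adds_rank1 m1 m2 (S : 'M[F]_(m1, N)) (P : 'M[F]_(m2, N)) :
  \rank P = 1%N -> \rank (S + P)%MS = (\rank S + ~~ (P <= S)%MS)%N.
Proof.
move=> rP; have := mxrank_sum_cap S P.
have := mxrank_leqif_sup (capmxSr S P).
rewrite sub_capmx submx_refl andbT rP => -[le_capP eq_capP].
by case: (P <= S)%MS eq_capP => /eqP /=; lia.
Qed.

Lemma mxrank_adds_row m (S : 'M[F]_(m, N)) (v : 'rV[F]_N) :
  \rank (S + v)%MS = (\rank S + ~~ (v <= S)%MS)%N.
Proof.
have [vS | nvS] := boolP (v <= S)%MS; first by rewrite addn0 (addsmx_idPl vS).
have rv : \rank v = 1%N.
  apply/eqP; rewrite eqn_leq rank_leq_row lt0n mxrank_eq0.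
  by apply: contraNneq nvS => ->; rewrite sub0mx.
by rewrite mxrank_adds_rank1 // (negPf nvS).
Qed.

End RankLemmas.

Section FreeExtensions.
Variables (F : finFieldType) (N : nat).
Local Notation q := #|F|.

Lemma card_row_submx m (S : 'M[F]_(m, N)) :
  #|[set v : 'rV[F]_N | (v <= S)%MS]| = (q ^ \rank S)%N.
Proof.
have -> : [set v : 'rV[F]_N | (v <= S)%MS] = [set u *m row_base S | u in [set: 'rV_(\rank S)]].
  apply/setP => v; rewrite inE; apply/idP/imsetP => [|[u _ ->]].
    by rewrite -(eq_row_base S) => /submxP[u ->]; exists u.
  by rewrite -(eq_row_base S) submxMl.
by rewrite card_imset ?cardsT ?card_mx ?mul1n //; apply/row_free_inj/row_base_free.
Qed.

Lemma card_row_submxD m1 m2 (U : 'M[F]_(m1, N)) (S : 'M[F]_(m2, N)) : (S <= U)%MS ->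
  #|[set v : 'rV[F]_N | (v <= U)%MS && ~~ (v <= S)%MS]| = (q ^ \rank U - q ^ \rank S)%N.
Proof.
move=> sSU; rewrite -!card_row_submx.
have sub_sets : [set v : 'rV_N | (v <= S)%MS] \subset [set v | (v <= U)%MS].
  by apply/subsetP => v; rewrite !inE => /submx_trans->.
rewrite -(setIidPr sub_sets) -cardsD.
by apply: eq_card => v; rewrite !inE andbC.
Qed.

Definition free_ext m1 m2 (U : 'M[F]_(m1, N)) (W : 'M[F]_(m2, N)) m :=
  [set X : 'M[F]_(m, N) | (X <= U)%MS && (\rank (W + X)%MS == \rank W + m)%N].

Lemma free_ext_col m1 m2 (U : 'M[F]_(m1, N)) (W : 'M[F]_(m2, N)) m
    (v : 'rV[F]_N) (X : 'M[F]_(m, N)) :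
  (col_mx v X \in free_ext U W (1 + m)) =
  [&& X \in free_ext U W m, (v <= U)%MS & ~~ (v <= W + X)%MS].
Proof.
have eWvX : (W + col_mx v X :=: (W + X) + v)%MS.
  by rewrite -addsmxA [(X + v)%MS]addsmxC; apply/adds_eqmx/eqmx_sym/addsmxE.
rewrite !inE col_mx_sub eWvX mxrank_adds_row.
have [le_rWX _] := mxrank_adds_leqif W X; have := rank_leq_row X.
by case: (X <= U)%MS; case: (v <= U)%MS; case: (v <= W + X)%MS => /=; lia.
Qed.

Lemma card_free_ext m1 m2 (U : 'M[F]_(m1, N)) (W : 'M[F]_(m2, N)) m : (W <= U)%MS ->
  #|free_ext U W m| = (\prod_(0 <= t < m) (q ^ \rank U - q ^ (\rank W + t)))%N.
Proof.
move=> sWU; elim: m => [|m IHm].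
  rewrite big_nil; apply/eqP; rewrite eqn_leq (leq_trans (max_card _)) ?card_mx // card_gt0.
  by apply/set0Pn; exists 0; rewrite inE sub0mx addsmx0 addn0 /=.
rewrite big_nat_recr //= -IHm -sum_nat_const.
pose extv (X : 'M[F]_(m, N)) := [set v : 'rV_N | (v <= U)%MS && ~~ (v <= W + X)%MS].
rewrite (eq_bigr (fun X => #|extv X|)) => [|X]; last first.
  rewrite inE => /andP[sXU /eqP rWX].
  by rewrite card_row_submxD ?rWX // addsmx_sub sWU.
rewrite -sum1_card (reindex (fun p => col_mx p.1 p.2 : 'M_(1 + m, N))) /=; last first.
  exists (fun Y : 'M_(1 + m, N) => (usubmx Y, dsubmx Y)) => [[v X] _ | Y _] /=.
    by rewrite col_mxKu col_mxKd.
  exact: vsubmxK.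
rewrite big_mkcond /=.
rewrite -(pair_bigA _ (fun v X => if col_mx v X \in free_ext U W (1 + m) then 1 else 0)%N).
rewrite exchange_big [RHS]big_mkcond /=.
apply: eq_bigr => X _; under eq_bigr do rewrite free_ext_col.
case: (X \in free_ext U W m) => /=; last by rewrite big1.
by rewrite -sum1_card [RHS]big_mkcond; apply: eq_bigr => v _; rewrite inE.
Qed.

End FreeExtensions.

Section SubspacesContaining.
Variables (F : finFieldType) (n : nat).
Local Notation q := #|F|.
Local Notation sub := 'M[F]_n.+1.

Definition subspaces_containing (W : sub) r :=
  [set K : sub | [&& is_sub K, \rank K == r & (W <= K)%MS]].

Lemma free_ext_subspace (W K : sub) m (X : 'M[F]_(m, n.+1)) :
  K \in subspaces_containing W (\rank W + m) ->
  (X \in free_ext K W m) = (X \in free_ext 1%:M W m) && (K == <<(W + X)%MS>>%MS).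
Proof.
rewrite !inE submx1 => /and3P[/eqP defK /eqP rK sWK].
apply/andP/andP => [[sXK rWX] | [rWX /eqP->]]; last by rewrite genmxE addsmxSr.
split=> //; rewrite -defK; apply/eqP/eq_genmx/eqmx_sym/eqmx_rank_geq.
  by rewrite addsmx_sub sWK.
by rewrite rK (eqP rWX).
Qed.

(* Double counting: a free extension X of W in the whole space is a free
   extension in exactly one of the subspaces, namely <<W + X>>. *)
Lemma card_subspaces_containing_mul (W : sub) m :
  (#|subspaces_containing W (\rank W + m)| *
     \prod_(0 <= t < m) (q ^ (\rank W + m) - q ^ (\rank W + t)) =
   \prod_(0 <= t < m) (q ^ n.+1 - q ^ (\rank W + t)))%N.
Proof.
have := card_free_ext m (submx1 W); rewrite mxrank1 => <-.
rewrite -sum_nat_const (eq_bigr (fun K => #|free_ext K W m|)) => [|K]; last first.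
  by rewrite inE => /and3P[_ /eqP rK sWK]; rewrite card_free_ext ?rK.
rewrite -[RHS]sum1_card.
rewrite (eq_bigr (fun K => \sum_X (X \in free_ext K W m : nat))) => [|K _]; last first.
  by rewrite -sum1_card big_mkcond.
rewrite exchange_big [RHS]big_mkcond /=; apply: eq_bigr => X _.
under eq_bigr => K SC_K do rewrite (free_ext_subspace X SC_K).
case: (boolP (X \in free_ext 1%:M W m)) => /= [X_ext | _]; last by rewrite big1.
have SC_WX : <<(W + X)%MS>>%MS \in subspaces_containing W (\rank W + m).
  move: X_ext; rewrite !inE => /andP[_ /eqP rWX].
  by rewrite /is_sub genmx_id !genmxE rWX addsmxSl !eqxx.
by rewrite (bigD1 _ SC_WX) eqxx big1 // => K /andP[_ /negPf->].
Qed.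

End SubspacesContaining.

Section GaussianCount.
Variables (R : realType) (F : finFieldType).
Local Notation q := #|F|.
Local Notation qR := (q%:R : R).

Let q_gt0 : (0 < q)%N := ltnW (card_finNzRing_gt1 F).

Lemma qexp_sub1_neq0 a : (0 < a)%N -> qR ^+ a - 1 != 0.
Proof.
move=> a_gt0; rewrite subr_eq0 -natrX pnatr_eq1 -(expn0 q) eqn_exp2l ?card_finNzRing_gt1 //.
by rewrite -lt0n.
Qed.

Lemma gaussR_neq0 a b : (b <= a)%N -> gaussR R F a b != 0.
Proof.
move=> le_ba; rewrite /gaussR mulf_neq0 ?invr_eq0 // prodf_seq_neq0; apply/allP => t /=.
  by rewrite mem_index_iota => /andP[_ lt_tb]; rewrite qexp_sub1_neq0 // subn_gt0 (leq_trans lt_tb).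
by move=> _; apply: qexp_sub1_neq0.
Qed.

Lemma natr_expnB a b : (a <= b)%N -> ((q ^ b - q ^ a)%N%:R : R) = qR ^+ a * (qR ^+ (b - a) - 1).
Proof.
by move=> le_ab; rewrite natrB ?leq_pexp2l // !natrX mulrBr mulr1 -exprD subnKC.
Qed.

Lemma card_subspaces_containing n (W : 'M[F]_n.+1) m : (\rank W + m <= n.+1)%N ->
  (#|subspaces_containing W (\rank W + m)|%:R : R) = gaussR R F (n.+1 - \rank W) m.
Proof.
move=> le_wm; set w := \rank W.
have /(congr1 (fun k : nat => k%:R : R)) := card_subspaces_containing_mul W m.
rewrite natrM !natr_prod.
rewrite (eq_big_nat _ _ (F2 := fun t => qR ^+ (w + t) * (qR ^+ (m - t) - 1))); last first.
  by move=> t /andP[_ lt_tm]; rewrite natr_expnB; [congr (_ * (_ ^+ _ - 1)) | ]; lia.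
rewrite [RHS](eq_big_nat _ _ (F2 := fun t => qR ^+ (w + t) * (qR ^+ (n.+1 - w - t) - 1))); last first.
  by move=> t /andP[_ lt_tm]; rewrite natr_expnB; [congr (_ * (_ ^+ _ - 1)) | ]; lia.
have qpow_prod_neq0 : \prod_(0 <= t < m) qR ^+ (w + t) != 0.
  by rewrite prodf_seq_neq0; apply/allP => t _; rewrite expf_neq0 // pnatr_eq0 -lt0n.
rewrite !big_split /=.
have -> : \prod_(0 <= t < m) (qR ^+ (m - t) - 1) = \prod_(0 <= t < m) (qR ^+ t.+1 - 1).
  by rewrite big_nat_rev /= add0n; apply: eq_big_nat => t /andP[_ lt_tm]; congr (_ ^+ _ - 1); lia.
rewrite mulrCA => /(mulfI qpow_prod_neq0) count_eq.
rewrite /gaussR -count_eq mulfK // prodf_seq_neq0; apply/allP => t _ /=; exact: qexp_sub1_neq0.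
Qed.

End GaussianCount.

Section Complement.
Variables (F : fieldType) (N m1 m2 : nat) (I : 'M[F]_(m1, N)) (pi : 'M[F]_(m2, N)).
Hypotheses (Ipi0 : (I :&: pi)%MS = 0) (rank_Ipi : (\rank I + \rank pi)%N = N).

Lemma mxrank_adds_complement m (B : 'M[F]_(m, N)) :
  (B <= pi)%MS -> \rank (I + B)%MS = (\rank I + \rank B)%N.
Proof.
move=> sBpi; apply: mxrank_disjoint_sum; apply/eqP; rewrite -submx0 -Ipi0.
by rewrite capmxS.
Qed.

Lemma mxrank_cap_complement m (A : 'M[F]_(m, N)) :
  (I <= A)%MS -> (\rank (A :&: pi)%MS + \rank I)%N = \rank A.
Proof.
move=> sIA; have := mxrank_sum_cap A pi.
have : \rank (A + pi)%MS = N.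
  apply/eqP; rewrite eqn_leq rank_leq_col -{1}rank_Ipi -mxrank_adds_complement //.
  by rewrite mxrankS ?addsmxS.
by lia.
Qed.

Lemma adds_cap_complement m (A : 'M[F]_(m, N)) :
  (I <= A)%MS -> (I + (A :&: pi) :=: A)%MS.
Proof.
move=> sIA; apply: eqmx_rank_geq; first by rewrite addsmx_sub sIA capmxSl.
by rewrite mxrank_adds_complement ?capmxSr // addnC mxrank_cap_complement.
Qed.

Lemma cap_adds_complement m (B : 'M[F]_(m, N)) :
  (B <= pi)%MS -> ((I + B) :&: pi :=: B)%MS.
Proof.
move=> sBpi; apply/eqmx_sym/eqmx_rank_geq; first by rewrite sub_capmx addsmxSr.
have := mxrank_cap_complement (addsmxSl I B); rewrite mxrank_adds_complement //.
by lia.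
Qed.

Lemma sub_adds_complement m m' (P : 'M[F]_(m, N)) (M : 'M[F]_(m', N)) :
  (M <= pi)%MS -> (P <= I + M)%MS = ((I + P) :&: pi <= M)%MS.
Proof.
move=> sMpi; apply/idP/idP => [sPIM | sIPpiM].
  rewrite -(cap_adds_complement sMpi) capmxS //.
  by rewrite addsmx_sub addsmxSl.
apply: submx_trans (addsmxSr I P) _.
by rewrite -(adds_cap_complement (addsmxSl I P)) addsmxS.
Qed.

Lemma genmx_adds_cap_complement m (A : 'M[F]_(m, N)) :
  (I <= A)%MS -> <<(I + <<A :&: pi>>)%MS>>%MS = <<A>>%MS.
Proof.
move=> sIA; apply/eq_genmx.
exact: eqmx_trans (adds_eqmx (eqmx_refl I) (genmxE _)) (adds_cap_complement sIA).
Qed.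

Lemma genmx_cap_adds_complement m (B : 'M[F]_(m, N)) :
  (B <= pi)%MS -> <<(<<(I + B)%MS>> :&: pi)%MS>>%MS = <<B>>%MS.
Proof.
move=> sBpi; apply/eq_genmx.
exact: eqmx_trans (cap_eqmx (genmxE _) (eqmx_refl pi)) (cap_adds_complement sBpi).
Qed.

End Complement.

Section CameronLiebler.
Variables (R : realType) (F : finFieldType) (n : nat).
Local Notation sub := 'M[F]_n.+1.

Lemma sum_indicator_card (T : finType) (A : {pred T}) (b : pred T) :
  \sum_(x in A) ((b x)%:R : R) = #|[set x in A | b x]|%:R.
Proof.
rewrite -sum1_card natr_sum big_mkcond [RHS]big_mkcond /=.
by apply: eq_bigr => x _; rewrite inE; case: (x \in A); case: (b x).
Qed.

Definition CL_repr (S H : sub) j (M : {set sub}) (v : sub -> R) :=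
  forall K, K \in aff_jspaces S H j ->
    ((K \in M)%:R : R) = \sum_(P in aff_points S H) ((P <= K)%MS%:R) * v P.

Lemma card_CL_containing (S H : sub) j (M : {set sub}) (v : sub -> R) (W : sub) :
  M \subset aff_jspaces S H j -> CL_repr S H j M v ->
  (#|[set K in M | (W <= K)%MS]|%:R : R) =
  \sum_(P in aff_points S H) v P * #|[set K in aff_jspaces S H j | (W + P <= K)%MS]|%:R.
Proof.
move=> sMA chiM.
have -> : [set K in M | (W <= K)%MS] = [set K in aff_jspaces S H j | (K \in M) && (W <= K)%MS].
  apply/setP => K; rewrite !inE; case KM: (K \in M); rewrite ?andbF //=.
  by have := subsetP sMA K KM; rewrite inE => ->.
rewrite -sum_indicator_card.
under eq_bigr => K AK do rewrite andbC -mulnb natrM chiM // mulr_sumr.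
rewrite exchange_big; apply: eq_bigr => P _.
rewrite -sum_indicator_card mulr_sumr; apply: eq_bigr => K _.
by rewrite addsmx_sub -mulnb natrM mulrA mulrC.
Qed.

End CameronLiebler.

Section AffineSpace.
Variables (R : realType) (F : finFieldType) (n k : nat) (Hinf : 'M[F]_n.+1).
Local Notation sub := 'M[F]_n.+1.
Local Notation AP := (aff_points (1%:M : sub) Hinf).
Local Notation AK := (aff_jspaces (1%:M : sub) Hinf k).

Lemma mxrank_adds_aff_point (W P : sub) :
  (W <= Hinf)%MS -> P \in AP -> \rank (W + P)%MS = (\rank W).+1.
Proof.
move=> sWH; rewrite inE => /and4P[_ /eqP rP _ nPH].
suff nPW : ~~ (P <= W)%MS by rewrite mxrank_adds_rank1 // nPW addn1.
by apply: contra nPH => /submx_trans->.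
Qed.

Lemma aff_jspaces_containing (W P : sub) : (W <= Hinf)%MS -> P \in AP ->
  [set K in AK | (W + P <= K)%MS] = subspaces_containing (W + P)%MS k.+1.
Proof.
move=> sWH; rewrite inE => /and4P[_ _ _ nPH]; apply/setP => K; rewrite !inE submx1.
case sWPK: (W + P <= K)%MS; rewrite ?andbF //= andbT; congr [&& _, _ & _].
apply/negP => sKH; move: nPH; rewrite (submx_trans _ sKH) //.
by move: sWPK; rewrite addsmx_sub => /andP[].
Qed.

Lemma card_CL_containing_infinite (L : {set sub}) (v : sub -> R) (W : sub) :
  L \subset AK -> CL_repr 1%:M Hinf k L v ->
  (W <= Hinf)%MS -> (\rank W <= k <= n)%N ->
  (#|[set K in L | (W <= K)%MS]|%:R : R) =
  (\sum_(P in AP) v P) * gaussR R F (n - \rank W) (k - \rank W).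
Proof.
move=> sLA chiL sWH /andP[le_wk le_kn].
rewrite (card_CL_containing _ sLA chiL) mulr_suml; apply: eq_bigr => P AP_P.
have rWP := mxrank_adds_aff_point sWH AP_P.
rewrite aff_jspaces_containing //.
have -> : k.+1 = (\rank (W + P)%MS + (k - \rank W))%N by rewrite rWP; lia.
rewrite card_subspaces_containing rWP ?subSS //.
by lia.
Qed.

End AffineSpace.

Lemma aff_points_jspaces0 (F : finFieldType) n (S H : 'M[F]_n.+1) :
  aff_points S H = aff_jspaces S H 0.
Proof. by apply/setP => P; rewrite !inE. Qed.

Section Projection.
Variables (R : realType) (F : finFieldType) (n : nat) (Hinf I pi : 'M[F]_n.+1).
Hypotheses (sIH : (I <= Hinf)%MS) (Ipi0 : (I :&: pi)%MS = 0)
  (rank_Ipi : (\rank I + \rank pi)%N = n.+1).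
Local Notation sub := 'M[F]_n.+1.
Local Notation AP := (aff_points (1%:M : sub) Hinf).
Local Notation AQ := (aff_points pi (pi :&: Hinf)%MS).
Local Notation AK k := (aff_jspaces (1%:M : sub) Hinf k).
Local Notation AM k := (aff_jspaces pi (pi :&: Hinf)%MS (k - \rank I)).

Lemma cap_aff_jspace k (A : sub) : \rank A = k.+1 -> (I <= A)%MS -> ~~ (A <= Hinf)%MS ->
  <<(A :&: pi)%MS>>%MS \in AM k.
Proof.
move=> rA sIA nAH.
have nApiH : ~~ (A :&: pi <= Hinf)%MS.
  apply: contra nAH => sApiH.
  by rewrite -(adds_cap_complement Ipi0 rank_Ipi sIA) addsmx_sub sIH.
have : \rank (A :&: pi) != 0%N.
  by rewrite mxrank_eq0; apply: contraNneq nApiH => ->; rewrite sub0mx.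
have := mxrank_cap_complement Ipi0 rank_Ipi sIA.
rewrite inE /is_sub genmx_id eqxx !genmxE capmxSr sub_capmx capmxSr nApiH rA andbT /=.
by move=> rApi_add rApi_neq0; apply/eqP; lia.
Qed.

Lemma adds_aff_jspace k M : (\rank I <= k)%N -> M \in AM k -> <<(I + M)%MS>>%MS \in AK k.
Proof.
move=> le_Ik; rewrite inE => /and4P[_ /eqP rM sMpi nMH].
rewrite inE /is_sub genmx_id eqxx !genmxE submx1 (mxrank_adds_complement Ipi0) // rM /=.
apply/andP; split; first by apply/eqP; lia.
by apply: contra nMH => sIMH; rewrite sub_capmx sMpi (submx_trans (addsmxSr I M)).
Qed.

Section Jset.
Variables (k : nat) (L : {set sub}).
Hypothesis sLA : L \subset AK k.

Lemma genmx_mem K : K \in L -> <<K>>%MS = K.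
Proof. by move=> /(subsetP sLA); rewrite inE => /and4P[/eqP]. Qed.

Lemma Jset_sub : Jset L I pi \subset AM k.
Proof.
apply/subsetP => M /imsetP[K]; rewrite inE => /andP[KL sIK] ->.
move: (subsetP sLA K KL); rewrite inE => /and4P[_ /eqP rK _ nKH].
exact: cap_aff_jspace.
Qed.

Lemma mem_Jset M : M \in AM k -> (M \in Jset L I pi) = (<<(I + M)%MS>>%MS \in L).
Proof.
rewrite inE => /and4P[/eqP defM _ sMpi _]; apply/imsetP/idP => [[K] | IM_L].
  rewrite inE => /andP[KL sIK] ->.
  by rewrite (genmx_adds_cap_complement Ipi0 rank_Ipi) // genmx_mem.
exists <<(I + M)%MS>>%MS; first by rewrite inE IM_L genmxE addsmxSl.
by rewrite (genmx_cap_adds_complement Ipi0 rank_Ipi).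
Qed.

Lemma card_Jset : #|Jset L I pi| = #|[set K in L | (I <= K)%MS]|.
Proof.
rewrite card_in_imset; first by apply: eq_card => K; rewrite !inE.
move=> K1 K2; rewrite !inE => /andP[K1L sIK1] /andP[K2L sIK2] eqK12.
rewrite -(genmx_mem K1L) -(genmx_mem K2L).
rewrite -(genmx_adds_cap_complement Ipi0 rank_Ipi sIK1).
by rewrite -(genmx_adds_cap_complement Ipi0 rank_Ipi sIK2) eqK12.
Qed.

End Jset.

Lemma projection_aff_point P : P \in AP -> <<((I + P) :&: pi)%MS>>%MS \in AQ.
Proof.
move=> AP_P; rewrite aff_points_jspaces0 -(subnn (\rank I)).
apply: cap_aff_jspace (mxrank_adds_aff_point sIH AP_P) (addsmxSl I P) _.
by move: AP_P; rewrite inE => /and4P[_ _ _]; apply: contra; apply: submx_trans (addsmxSr I P).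
Qed.

Lemma sub_adds_aff_point P Q : P \in AP -> Q \in AQ ->
  (P <= I + Q)%MS = (Q == <<((I + P) :&: pi)%MS>>%MS).
Proof.
move=> AP_P; rewrite inE => /and4P[/eqP defQ /eqP rQ sQpi _].
rewrite (sub_adds_complement Ipi0 rank_Ipi) //; apply/idP/eqP => [sIPpiQ | ->]; last first.
  by rewrite genmxE.
have rIPpi := mxrank_cap_complement Ipi0 rank_Ipi (addsmxSl I P).
rewrite (mxrank_adds_aff_point sIH AP_P) in rIPpi.
rewrite -defQ; apply/eq_genmx/eqmx_sym/eqmx_rank_geq => //.
by rewrite rQ; lia.
Qed.

Lemma sum_aff_points_projection (M : sub) P : (M <= pi)%MS -> P \in AP ->
  \sum_(Q in AQ) (((Q <= M)%MS && (P <= I + Q)%MS)%:R : R) = ((P <= I + M)%MS)%:R.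
Proof.
move=> sMpi AP_P; under eq_bigr => Q AQ_Q do rewrite sub_adds_aff_point //.
rewrite (bigD1 _ (projection_aff_point AP_P)) eqxx big1 => [|Q /andP[_ /negPf->]]; last first.
  by rewrite andbF.
by rewrite /= addr0 andbT genmxE (sub_adds_complement Ipi0 rank_Ipi).
Qed.

Lemma CL_repr_Jset k (L : {set sub}) (v : sub -> R) :
  L \subset AK k -> CL_repr 1%:M Hinf k L v -> (\rank I <= k)%N ->
  CL_repr pi (pi :&: Hinf)%MS (k - \rank I) (Jset L I pi)
    (fun Q => \sum_(P in AP) ((P <= I + Q)%MS%:R) * v P).
Proof.
move=> sLA chiL le_Ik M AM_M; have := AM_M; rewrite inE => /and4P[_ _ sMpi _].
rewrite (mem_Jset sLA AM_M) chiL ?adds_aff_jspace //; under eq_bigr do rewrite genmxE.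
under [RHS]eq_bigr do rewrite mulr_sumr.
rewrite [RHS]exchange_big; apply: eq_bigr => P AP_P.
rewrite -(sum_aff_points_projection sMpi AP_P) mulr_suml; apply: eq_bigr => Q _.
by rewrite mulrA -natrM mulnb.
Qed.

End Projection.

Unset Implicit Arguments.

Theorem theorem6p13 (R : realType) (F : finFieldType) (n k i : nat)
  (Hinf I pi : 'M[F]_n.+1) (L : {set 'M[F]_n.+1}) (x : R) :
  (2 <= k)%N -> (i <= k - 2)%N -> (2 * k - i <= n)%N -> (k + 2 <= n)%N ->
  \rank Hinf = n ->
  CL_set (1%:M : 'M[F]_n.+1) Hinf k L x ->
  \rank I = i.+1 -> (I <= Hinf)%MS ->
  \rank pi = (n - i)%N -> \rank (I :&: pi)%MS = 0%N ->
  CL_set pi (pi :&: Hinf)%MS (k - i - 1) (Jset L I pi) x.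
Proof.
move=> k_ge2 le_ik _ le_kn _ [sLA [v chiL] ->] rI sIH rpi /eqP.
rewrite mxrank_eq0 => /eqP Ipi0.
have rank_Ipi : (\rank I + \rank pi)%N = n.+1 by rewrite rI rpi; lia.
have le_Ik : (\rank I <= k)%N by rewrite rI; lia.
have -> : (k - i - 1)%N = (k - \rank I)%N by rewrite rI; lia.
pose s := \sum_(P in aff_points (1%:M : 'M[F]_n.+1) Hinf) v P.
have card_L : (#|L|%:R : R) = s * gaussR R F n k.
  have -> : L = [set K in L | ((0 : 'M[F]_n.+1) <= K)%MS].
    by apply/setP => K; rewrite inE sub0mx andbT.
  by rewrite (card_CL_containing_infinite sLA chiL (sub0mx _ _)) mxrank0 ?subn0 //; lia.
have card_J : (#|Jset L I pi|%:R : R) = s * gaussR R F (\rank pi).-1 (k - \rank I).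
  rewrite (card_Jset Ipi0 rank_Ipi sLA) (card_CL_containing_infinite sLA chiL sIH).
    by rewrite rI rpi; congr (_ * gaussR _ _ _ _); lia.
  by rewrite le_Ik; lia.
split.
- exact: Jset_sub.
- exact: ex_intro _ _ (CL_repr_Jset sIH Ipi0 rank_Ipi sLA chiL le_Ik).
- by rewrite mxrank1 card_L card_J !mulfK // gaussR_neq0 //; lia.
Qed.
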